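(* Let $H=\mathbb C^m$ and let $\phi\colon M_n\to M_m$ be linear. Then $\phi$ is positive if and only if $C_{\phi^t}\in P(M_n,S(H))$, if and only if $C_\phi\in P(M_n,S(H))$. Hence $P(M_n,S(H))=\{C_\phi:\phi\colon M_n\to M_m \text{ linear and positive}\}$.
   Context: $M_n$ denotes the complex $n\times n$ matrices, $(e_{ij})$ a complete set of matrix units of $M_n$, $t$ the transpose map, $\phi^t=t\circ\phi\circ t$, and $C_\phi=\sum_{i,j}e_{ij}\otimes\phi(e_{ij})\in M_n\otimes M_m$ the Choi matrix of $\phi$. $S(H)$ is the closed cone of linear maps $M_m\to M_m$ generated by maps $x\mapsto\sum_{i=1}^k\omega_i(x)a_i$ with $\omega_i$ states of $M_m$ and $a_i\in M_m$ positive. $P(M_n,S(H))=\{x\in M_n\otimes M_m:(\iota\otimes\alpha)(x)\ge0\ \forall\alpha\in S(H)\}$, where $\iota$ is the identity map of $M_n$. *)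

From HB Require Import structures.
From mathcomp Require Import all_boot all_order all_algebra.
From mathcomp Require Import complex mxtens.
Set Implicit Arguments.
Unset Strict Implicit.
Unset Printing Implicit Defensive.
Import Order.TTheory GRing.Theory Num.Theory.
Local Open Scope ring_scope.

(* Complex numbers: C = R[i] for a real closed field R (R = the reals gives
   the usual complex numbers). *)

Section Defs.
Variable R : rcfType.
Local Notation C := R[i].

Definition adjmx {p q : nat} (A : 'M[C]_(p, q)) : 'M[C]_(q, p) :=
  map_mx (fun z => z^*) A^T.

Definition psd {p : nat} (A : 'M[C]_p) : Prop :=
  adjmx A = A /\ forall v : 'cV[C]_p, 0 <= (adjmx v *m A *m v) 0 0.

Definition is_linear_map {p q r s : nat} (f : 'M[C]_(p, q) -> 'M[C]_(r, s)) : Prop :=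
  forall (a : C) x y, f (a *: x + y) = a *: f x + f y.

Definition positive_map {n m : nat} (phi : 'M[C]_n -> 'M[C]_m) : Prop :=
  forall x, psd x -> psd (phi x).

Definition is_state {m : nat} (w : 'M[C]_m -> C) : Prop :=
  (forall (a : C) x y, w (a *: x + y) = a * w x + w y) /\
  (forall x, psd x -> 0 <= w x) /\ w 1%:M = 1.

Definition transpose_map {n m : nat} (phi : 'M[C]_n -> 'M[C]_m) : 'M[C]_n -> 'M[C]_m :=
  fun x => (phi x^T)^T.

(* M_n (x) M_m is realized as 'M_(n*m) via the Kronecker product *t,
   e_ij (x) b = delta_mx i j *t b. *)
Definition choi {n m : nat} (phi : 'M[C]_n -> 'M[C]_m) : 'M[C]_(n * m) :=
  \sum_(i < n) \sum_(j < n) (delta_mx i j *t phi (delta_mx i j)).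

(* the (i,j) block x_ij of x = sum_ij e_ij (x) x_ij *)
Definition block {n m : nat} (x : 'M[C]_(n * m)) (i j : 'I_n) : 'M[C]_m :=
  \matrix_(k, l) x (mxtens_index (i, k)) (mxtens_index (j, l)).

Definition id_tens {n m : nat} (alpha : 'M[C]_m -> 'M[C]_m) (x : 'M[C]_(n * m))
  : 'M[C]_(n * m) :=
  \sum_(i < n) \sum_(j < n) (delta_mx i j *t alpha (block x i j)).

Definition in_gen_cone {m : nat} (beta : 'M[C]_m -> 'M[C]_m) : Prop :=
  exists (k : nat) (w : 'I_k -> 'M[C]_m -> C) (a : 'I_k -> 'M[C]_m),
    (forall t, is_state (w t)) /\ (forall t, psd (a t)) /\
    forall x, beta x = \sum_(t < k) (w t x *: a t).

(* S(H): closure (in the finite-dimensional space of linear maps M_m -> M_m,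
   coordinates = entries of the images of the matrix units) of the cone. *)
Definition SH {m : nat} (alpha : 'M[C]_m -> 'M[C]_m) : Prop :=
  is_linear_map alpha /\
  forall eps : R, 0 < eps -> exists beta, in_gen_cone beta /\
    forall (k l : 'I_m) (p q : 'I_m),
      `| alpha (delta_mx k l) p q - beta (delta_mx k l) p q | < (eps%:C)%C.

Definition PSH {n m : nat} (x : 'M[C]_(n * m)) : Prop :=
  forall alpha : 'M[C]_m -> 'M[C]_m, SH alpha -> psd (id_tens alpha x).

End Defs.

From HB Require Import structures.
From mathcomp Require Import all_boot all_order all_algebra.
From mathcomp Require Import complex mxtens spectral ring lra.
Import Order.TTheory GRing.Theory Num.Theory.
Local Open Scope ring_scope.
Set Implicit Arguments.
Unset Strict Implicit.
Unset Printing Implicit Defensive.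

(* A generator beta = sum_t w_t(.) a_t of S(H) maps C_phi to sum_t W_t (x) a_t with
   W_t = [w_t(phi(e_ij))]; for positive phi each W_t is positive, since its
   quadratic form at c is w_t(phi(conj(c) c^T)), and Kronecker products of positive
   matrices are positive.  The quadratic forms of (iota (x) alpha)(C_phi) depend
   linearly on the entries of the alpha(e_kl), so positivity passes to the closure.
   Conversely, testing C_phi against w_u(.) 1, with w_u the vector state of u, makes
   W = [w_u(phi(e_ij))] positive, and <phi(x) u, u> = |u|^2 sum_ij x_ij W_ij is a
   pairing of two positive matrices.  Transposition preserves positivity, and every
   x is the Choi matrix of y |-> sum_ij y_ij x_ij. *)

Section PositiveMatrices.
Variable R : rcfType.
Local Notation C := R[i].

Lemma adjmxD p q (A B : 'M[C]_(p, q)) : adjmx (A + B) = adjmx A + adjmx B.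
Proof. by rewrite /adjmx linearD /= map_mxD. Qed.

Lemma adjmxZ p q (a : C) (A : 'M[C]_(p, q)) : adjmx (a *: A) = a^* *: adjmx A.
Proof. by rewrite /adjmx linearZ /= map_mxZ. Qed.

Lemma adjmxM p q r (A : 'M[C]_(p, q)) (B : 'M[C]_(q, r)) :
  adjmx (A *m B) = adjmx B *m adjmx A.
Proof. by rewrite /adjmx trmx_mul map_mxM. Qed.

Lemma adjmxK p q (A : 'M[C]_(p, q)) : adjmx (adjmx A) = A.
Proof. by apply/matrixP => i j; rewrite !mxE conjCK. Qed.

Lemma adjmx1 p : adjmx (1%:M : 'M[C]_p) = 1%:M.
Proof. by rewrite /adjmx trmx1 map_mx1. Qed.

Lemma adjmx_delta p q (i : 'I_p) (j : 'I_q) :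
  adjmx (delta_mx i j : 'M[C]_(p, q)) = delta_mx j i.
Proof. by rewrite /adjmx trmx_delta map_delta_mx. Qed.

Lemma adjmx_tens p q r s (A : 'M[C]_(p, q)) (B : 'M[C]_(r, s)) :
  adjmx (A *t B) = adjmx A *t adjmx B.
Proof. by rewrite /adjmx trmx_tens; apply: (map_mxT (@Num.conj _)). Qed.

Definition mxform p (M : 'M[C]_p) (u v : 'cV[C]_p) : C := (adjmx u *m M *m v) 0 0.

Lemma mxformE p (M : 'M[C]_p) u v :
  mxform M u v = \sum_i \sum_j (u i 0)^* * M i j * v j 0.
Proof.
rewrite /mxform mxE; under eq_bigr => j _ do rewrite mxE mulr_suml.
rewrite exchange_big; apply: eq_bigr => i _; apply: eq_bigr => j _.
by rewrite !mxE.
Qed.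

Lemma mxform_delta p (M : 'M[C]_p) k l :
  mxform M (delta_mx k 0) (delta_mx l 0) = M k l.
Proof. by rewrite /mxform adjmx_delta -rowE -colE !mxE. Qed.

Lemma mxformDl p (M : 'M[C]_p) u1 u2 v :
  mxform M (u1 + u2) v = mxform M u1 v + mxform M u2 v.
Proof. by rewrite /mxform adjmxD !mulmxDl mxE. Qed.

Lemma mxformDr p (M : 'M[C]_p) u v1 v2 :
  mxform M u (v1 + v2) = mxform M u v1 + mxform M u v2.
Proof. by rewrite /mxform mulmxDr mxE. Qed.

Lemma mxformZl p (M : 'M[C]_p) a u v : mxform M (a *: u) v = a^* * mxform M u v.
Proof. by rewrite /mxform adjmxZ -!scalemxAl mxE. Qed.

Lemma mxformZr p (M : 'M[C]_p) a u v : mxform M u (a *: v) = a * mxform M u v.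
Proof. by rewrite /mxform -scalemxAr mxE. Qed.

Lemma mxform_linear p (u v : 'cV[C]_p) a (M N : 'M[C]_p) :
  mxform (a *: M + N) u v = a * mxform M u v + mxform N u v.
Proof.
by rewrite /mxform mulmxDr mulmxDl -scalemxAr -scalemxAl mxE [X in X + _]mxE.
Qed.

Lemma mxform_polar p (M : 'M[C]_p) k l a :
  mxform M (delta_mx k 0 + a *: delta_mx l 0) (delta_mx k 0 + a *: delta_mx l 0) =
  M k k + a * M k l + a^* * M l k + a^* * a * M l l.
Proof.
rewrite !(mxformDl, mxformDr, mxformZl, mxformZr) !mxform_delta.
by rewrite mulrDr mulrA addrA.
Qed.

Lemma mxform_herm p (M : 'M[C]_p) : (forall v, 0 <= mxform M v v) -> adjmx M = M.
Proof.
move=> M_ge0; apply/matrixP => k l; rewrite /adjmx !mxE.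
have diag_real j : (M j j)^* = M j j.
  by have := M_ge0 (delta_mx j 0); rewrite mxform_delta => /geC0_conj.
have polar a : a^* * (M k l)^* + a * (M l k)^* = a * M k l + a^* * M l k.
  have := geC0_conj (M_ge0 (delta_mx k 0 + a *: delta_mx l 0)).
  rewrite mxform_polar !rmorphD !rmorphM /= !conjCK !diag_real (mulrC a a^*).
  by rewrite -!addrA => /addrI; rewrite !addrA => /addIr.
(* the polarization identities at a = 1 and a = 'i determine (M l k)^* *)
have polar1 := polar 1; have polari := polar 'i.
rewrite conjC1 !mul1r in polar1; rewrite conjCi in polari.
have -> : (M l k)^* = (((M k l)^* + (M l k)^*) +
   (- 'i * (M k l)^* + 'i * (M l k)^*) / 'i) / 2%:R.
  by field; rewrite ?neq0Ci ?pnatr_eq0.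
by rewrite polar1 polari; field; rewrite ?neq0Ci ?pnatr_eq0.
Qed.

Lemma psdP p (M : 'M[C]_p) : psd M <-> forall v, 0 <= mxform M v v.
Proof. by split => [[]//|M_ge0]; split => //; apply: mxform_herm. Qed.

Lemma mxform0 p (M : 'M[C]_p) u : mxform M 0 u = 0.
Proof. by rewrite /mxform /adjmx trmx0 map_mx0 !mul0mx mxE. Qed.

Lemma mxform_sum p (u v : 'cV[C]_p) I (r : seq I) (P : pred I) (F : I -> 'M[C]_p) :
  mxform (\sum_(i <- r | P i) F i) u v = \sum_(i <- r | P i) mxform (F i) u v.
Proof.
apply: (big_morph (fun M => mxform M u v)) => [M N|].
  by rewrite -[M]scale1r mxform_linear mul1r scale1r.
by rewrite /mxform mulmx0 mul0mx mxE.
Qed.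

Lemma mxform_congr p q (Q : 'M[C]_(p, q)) M u v :
  mxform (adjmx Q *m M *m Q) u v = mxform M (Q *m u) (Q *m v).
Proof. by rewrite /mxform adjmxM !mulmxA. Qed.

Lemma mxform1E p (u : 'cV[C]_p) : mxform 1%:M u u = \sum_i (u i 0)^* * u i 0.
Proof. by rewrite /mxform mulmx1 mxE; apply: eq_bigr => i _; rewrite !mxE. Qed.

Lemma mxform1_ge0 p (u : 'cV[C]_p) : 0 <= mxform 1%:M u u.
Proof. by rewrite mxform1E sumr_ge0 // => i _; rewrite mulrC mul_conjC_ge0. Qed.

Lemma mxform1_gt0 p (u : 'cV[C]_p) : u != 0 -> 0 < mxform 1%:M u u.
Proof.
move=> u_neq0; rewrite lt_def mxform1_ge0 andbT; apply: contraNneq u_neq0.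
have ge0 i : true -> 0 <= (u i 0)^* * u i 0 by rewrite mulrC mul_conjC_ge0.
rewrite mxform1E => /(psumr_eq0P ge0) u_eq0; apply/eqP/matrixP => i j.
by rewrite ord1 mxE; have /eqP := u_eq0 i isT; rewrite mulf_eq0 conjC_eq0 orbb => /eqP.
Qed.

Lemma mxform_suml p (M : 'M[C]_p) I (r : seq I) (P : pred I) (F : I -> 'cV[C]_p) v :
  mxform M (\sum_(i <- r | P i) F i) v = \sum_(i <- r | P i) mxform M (F i) v.
Proof.
exact: (big_morph (mxform M ^~ v) (fun u1 u2 => mxformDl M u1 u2 v) (mxform0 M v)).
Qed.

Lemma mxform_sumr p (M : 'M[C]_p) I (r : seq I) (P : pred I) (F : I -> 'cV[C]_p) u :
  mxform M u (\sum_(i <- r | P i) F i) = \sum_(i <- r | P i) mxform M u (F i).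
Proof.
apply: (big_morph (mxform M u) (mxformDr M u)).
by rewrite /mxform mulmx0 mxE.
Qed.

Lemma psd_sum p I (r : seq I) (P : pred I) (F : I -> 'M[C]_p) :
  (forall i, P i -> psd (F i)) -> psd (\sum_(i <- r | P i) F i).
Proof.
move=> F_psd; apply/psdP => v; rewrite mxform_sum sumr_ge0 // => i /F_psd.
by move/psdP.
Qed.

Lemma psd_congr p q (Q : 'M[C]_(p, q)) M : psd M -> psd (adjmx Q *m M *m Q).
Proof. by move=> /psdP M_psd; apply/psdP => v; rewrite mxform_congr. Qed.

Lemma psd1 p : psd (1%:M : 'M[C]_p).
Proof. by apply/psdP => v; apply: mxform1_ge0. Qed.

Lemma psd_trmx p (M : 'M[C]_p) : psd M -> psd M^T.
Proof.
move=> /psdP M_psd; apply/psdP => v.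
suff -> : mxform M^T v v = mxform M (map_mx Num.conj v) (map_mx Num.conj v) by [].
rewrite !mxformE exchange_big; apply: eq_bigr => i _; apply: eq_bigr => j _.
by rewrite !mxE conjCK; ring.
Qed.

Lemma big_mxtens p q (F : 'I_(p * q) -> C) :
  \sum_k F k = \sum_(i < p) \sum_(j < q) F (mxtens_index (i, j)).
Proof.
rewrite pair_big /=; apply: reindex => /=.
exists (@mxtens_unindex p q) => k _.
  by case: k => ? ?; rewrite mxtens_indexK.
by rewrite -surjective_pairing mxtens_unindexK.
Qed.

Lemma mxform_mxtensE p q (M : 'M[C]_(p * q)) u v :
  mxform M u v = \sum_i \sum_k \sum_j \sum_l
    (u (mxtens_index (i, k)) 0)^* * M (mxtens_index (i, k)) (mxtens_index (j, l)) *
      v (mxtens_index (j, l)) 0.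
Proof.
rewrite mxformE big_mxtens; apply: eq_bigr => i _; apply: eq_bigr => k _.
by rewrite big_mxtens.
Qed.

Lemma mxform_tens p q (A : 'M[C]_p) (B : 'M[C]_q) (u u' : 'cV_p) (v v' : 'cV_q) :
  mxform (A *t B) (u *t v) (u' *t v') = mxform A u u' * mxform B v v'.
Proof.
rewrite /mxform (adjmx_tens u v).
change (((adjmx u *t adjmx v) *m (A *t B) *m (u' *t v') : 'M_(1 * 1)) 0 0 =
  (adjmx u *m A *m u') 0 0 * (adjmx v *m B *m v') 0 0).
by rewrite !tensmx_mul -tensmxE; congr (_ _ _); apply: val_inj.
Qed.

Lemma psd_tens_diag p q (W : 'M[C]_p) (d : 'rV[C]_q) :
  psd W -> (forall k, 0 <= d 0 k) -> psd (W *t diag_mx d).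
Proof.
move=> /psdP W_psd d_ge0; apply/psdP => v.
pose col_v k : 'cV[C]_p := \col_i v (mxtens_index (i, k)) 0.
suff -> : mxform (W *t diag_mx d) v v = \sum_k d 0 k * mxform W (col_v k) (col_v k).
  by apply: sumr_ge0 => k _; apply: mulr_ge0.
rewrite mxform_mxtensE exchange_big; apply: eq_bigr => k _.
rewrite mxformE mulr_sumr; apply: eq_bigr => i _; rewrite mulr_sumr.
apply: eq_bigr => j _; rewrite (bigD1 k) //= big1 ?addr0 => [|l /negbTE kl].
  by rewrite tensmxE !mxE eqxx mulr1n; ring.
by rewrite tensmxE mxE eq_sym kl mulr0n mulr0 mulr0 mul0r.
Qed.

Lemma psd_spectral p (a : 'M[C]_p) : psd a ->
  exists2 d : 'rV[C]_p, (forall k, 0 <= d 0 k) & exists P, a = adjmx P *m diag_mx d *m P.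
Proof.
move=> a_psd; have /psdP a_ge0 := a_psd; have [a_herm _] := a_psd.
have /orthomx_spectralP : a \is normalmx.
  by apply/normalmxP; change (a *m adjmx a = adjmx a *m a); rewrite a_herm.
rewrite invmx_unitary ?spectral_unitarymx //.
set P := spectralmx a; set d := spectral_diag a => a_eq.
exists d; last by exists P.
move=> k; have := a_ge0 (adjmx P *m delta_mx k 0).
have PPt : P *m adjmx P = 1%:M by apply/unitarymxP/spectral_unitarymx.
rewrite -mxform_congr adjmxK a_eq !mulmxA PPt mul1mx -mulmxA PPt mulmx1.
by rewrite mxform_delta mxE eqxx mulr1n.
Qed.

Lemma psd_tensmx p q (W : 'M[C]_p) (a : 'M[C]_q) : psd W -> psd a -> psd (W *t a).
Proof.
move=> W_psd /psd_spectral [d d_ge0 [P ->]].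
have -> : W *t (adjmx P *m diag_mx d *m P) =
    adjmx (1%:M *t P) *m (W *t diag_mx d) *m (1%:M *t P).
  by rewrite adjmx_tens adjmx1 !tensmx_mul mul1mx mulmx1.
by apply: psd_congr; apply: psd_tens_diag.
Qed.

Lemma psd_tensmx_l p q (A : 'M[C]_p) (B : 'M[C]_q) v :
  psd (A *t B) -> 0 < mxform B v v -> psd A.
Proof.
move=> /psdP AB_psd Bv_gt0; apply/psdP => u.
by have := AB_psd (u *t v); rewrite mxform_tens pmulr_lge0.
Qed.

Lemma psd_pairing_ge0 p (A B : 'M[C]_p) :
  psd A -> psd B -> 0 <= \sum_i \sum_j A i j * B i j.
Proof.
move=> A_psd B_psd; have /psdP AB_psd := psd_tensmx A_psd B_psd.
pose e : 'cV[C]_(p * p) :=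
  \sum_i ((delta_mx i 0 : 'cV_p) *t (delta_mx i 0 : 'cV_p) : 'cV_(p * p)).
have := AB_psd e; rewrite mxform_suml; congr (0 <= _); apply: eq_bigr => i _.
by rewrite mxform_sumr; apply: eq_bigr => j _; rewrite mxform_tens !mxform_delta.
Qed.

End PositiveMatrices.

Section LinearSumDelta.
Variables (R : rcfType) (p q : nat) (V : lmodType R[i]) (f : 'M[R[i]]_(p, q) -> V).
Hypothesis f_lin : forall (a : R[i]) x y, f (a *: x + y) = a *: f x + f y.
HB.instance Definition _ := GRing.isLinear.Build R[i] _ _ _ f f_lin.

Lemma linear_sum_delta x : f x = \sum_i \sum_j x i j *: f (delta_mx i j).
Proof.
rewrite {1}[x]matrix_sum_delta linear_sum; apply: eq_bigr => i _.
by rewrite linear_sum; apply: eq_bigr => j _; rewrite linearZ.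
Qed.

End LinearSumDelta.

Section ChoiMatrices.
Variable R : rcfType.
Local Notation C := R[i].

Lemma mxtens_matrixP p q (A B : 'M[C]_(p * q)) :
  (forall i k j l, A (mxtens_index (i, k)) (mxtens_index (j, l)) =
                   B (mxtens_index (i, k)) (mxtens_index (j, l))) -> A = B.
Proof.
move=> AB; apply/matrixP => x y.
by case: (mxtens_indexP x) => i k; case: (mxtens_indexP y) => j l.
Qed.

Lemma sum_delta_mxE p q (G : 'I_p -> 'I_q -> C) i j :
  \sum_a \sum_b delta_mx a b i j * G a b = G i j.
Proof.
rewrite (bigD1 i) //= (bigD1 j) //= mxE !eqxx mul1r !big1 ?addr0 // => [a ai|b bj].
  by apply: big1 => b _; rewrite mxE eq_sym (negbTE ai) mul0r.
by rewrite mxE eq_sym (negbTE bj) andbF mul0r.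
Qed.

Lemma sum_delta_tensE n m (F : 'I_n -> 'I_n -> 'M[C]_m) i k j l :
  (\sum_a \sum_b delta_mx a b *t F a b) (mxtens_index (i, k)) (mxtens_index (j, l)) =
  F i j k l.
Proof.
rewrite summxE -(sum_delta_mxE (fun a b => F a b k l)); apply: eq_bigr => a _.
by rewrite summxE; apply: eq_bigr => b _; rewrite tensmxE.
Qed.

Variables (n m : nat).

Lemma choiE (phi : 'M[C]_n -> 'M[C]_m) i k j l :
  choi phi (mxtens_index (i, k)) (mxtens_index (j, l)) = phi (delta_mx i j) k l.
Proof. exact: sum_delta_tensE. Qed.

Lemma id_tensE (alpha : 'M[C]_m -> 'M[C]_m) (x : 'M[C]_(n * m)) i k j l :
  id_tens alpha x (mxtens_index (i, k)) (mxtens_index (j, l)) = alpha (block x i j) k l.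
Proof. exact: sum_delta_tensE. Qed.

Lemma block_choi (phi : 'M[C]_n -> 'M[C]_m) i j :
  block (choi phi) i j = phi (delta_mx i j).
Proof. by apply/matrixP => k l; rewrite mxE choiE. Qed.

Definition map_of_choi (x : 'M[C]_(n * m)) (y : 'M[C]_n) : 'M[C]_m :=
  \sum_i \sum_j y i j *: block x i j.

Lemma map_of_choi_linear x : is_linear_map (map_of_choi x).
Proof.
move=> a y z; rewrite /map_of_choi scaler_sumr -big_split; apply: eq_bigr => i _.
rewrite scaler_sumr -big_split; apply: eq_bigr => j _.
by rewrite !mxE scalerDl scalerA.
Qed.

Lemma choi_map_of_choi x : choi (map_of_choi x) = x.
Proof.
apply: mxtens_matrixP => i k j l; rewrite choiE summxE.
rewrite -(sum_delta_mxE (fun a b => x (mxtens_index (a, k)) (mxtens_index (b, l)))).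
apply: eq_bigr => a _; rewrite summxE; apply: eq_bigr => b _.
by rewrite !mxE (eq_sym a) (eq_sym b).
Qed.

Definition choi_state (w : 'M[C]_m -> C) (phi : 'M[C]_n -> 'M[C]_m) : 'M[C]_n :=
  \matrix_(i, j) w (phi (delta_mx i j)).

Lemma id_tens_choi_gen k (w : 'I_k -> 'M[C]_m -> C) (a : 'I_k -> 'M[C]_m) beta phi :
  (forall y, beta y = \sum_t w t y *: a t) ->
  id_tens beta (choi phi) = \sum_t choi_state (w t) phi *t a t.
Proof.
move=> beta_eq; apply: mxtens_matrixP => i p j q.
rewrite id_tensE block_choi beta_eq !summxE; apply: eq_bigr => t _.
by rewrite tensmxE !mxE.
Qed.

End ChoiMatrices.

Section PositiveMaps.
Variable R : rcfType.
Local Notation C := R[i].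
Variables (n m : nat).

Lemma choi_stateE (w : 'M[C]_m -> C) (phi : 'M[C]_n -> 'M[C]_m) x :
  is_linear_map phi -> is_state w ->
  w (phi x) = \sum_i \sum_j x i j * choi_state w phi i j.
Proof.
move=> phi_lin [w_lin _].
have wphi_lin a y z : w (phi (a *: y + z)) = a * w (phi y) + w (phi z).
  by rewrite phi_lin w_lin.
rewrite (linear_sum_delta wphi_lin); apply: eq_bigr => i _.
by apply: eq_bigr => j _; rewrite mxE.
Qed.

Lemma psd_choi_state (w : 'M[C]_m -> C) (phi : 'M[C]_n -> 'M[C]_m) :
  is_linear_map phi -> positive_map phi -> is_state w -> psd (choi_state w phi).
Proof.
move=> phi_lin phi_pos w_state; apply/psdP => c.
have -> : mxform (choi_state w phi) c c = w (phi (adjmx c^T *m 1%:M *m c^T)).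
  rewrite (choi_stateE _ phi_lin w_state) mxformE; apply: eq_bigr => i _.
  by apply: eq_bigr => j _; rewrite mulmx1 !mxE big_ord1 !mxE mulrAC.
by apply: w_state.2.1; apply/phi_pos/psd_congr/psd1.
Qed.

Lemma in_gen_cone_linear (beta : 'M[C]_m -> 'M[C]_m) :
  in_gen_cone beta -> is_linear_map beta.
Proof.
move=> [k [w [a [w_state [_ beta_eq]]]]] c x y; rewrite !beta_eq scaler_sumr -big_split.
by apply: eq_bigr => t _; rewrite (w_state t).1 scalerDl scalerA.
Qed.

Lemma psd_id_tens_choi_gen (beta : 'M[C]_m -> 'M[C]_m) (phi : 'M[C]_n -> 'M[C]_m) :
  is_linear_map phi -> positive_map phi -> in_gen_cone beta ->
  psd (id_tens beta (choi phi)).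
Proof.
move=> phi_lin phi_pos [k [w [a [w_state [a_psd beta_eq]]]]].
rewrite (id_tens_choi_gen phi beta_eq); apply: psd_sum => t _.
by apply: psd_tensmx; [apply: psd_choi_state | apply: a_psd].
Qed.

Lemma ge0_approx (z K : C) :
  (forall e : R, 0 < e -> exists2 r, 0 <= r & `|z - r| <= K * (e%:C)%C) -> 0 <= z.
Proof.
move=> approx.
have dist_le r : 0 <= r -> `|z - `|z| | <= 2%:R * `|z - r|.
  move=> r_ge0; rewrite mulr2n mulrDl mul1r (le_trans (ler_distD r _ _)) // lerD2l.
  by rewrite distrC -{1}(ger0_norm r_ge0) ler_dist_dist.
have K_ge0 : 0 <= K.
  have [r _] := approx 1 ltr01; rewrite rmorph1 mulr1; exact: le_trans (normr_ge0 _).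
suff : `|z - `|z| | <= 0 by rewrite normr_le0 subr_eq0 => /eqP ->.
apply/ler_addgt0Pr => e e_gt0; rewrite add0r.
have /complex_realP [er e_eq] := gtr0_real e_gt0.
have /complex_realP [Kr K_eq] := ger0_real K_ge0.
move: e_gt0 K_ge0 approx; rewrite e_eq K_eq ltcR lecR => er_gt0 Kr_ge0 approx.
have eps_gt0 : 0 < er / (2%:R * Kr + 1) by rewrite divr_gt0 // ltr_wpDl ?mulr_ge0.
have [r r_ge0 zr] := approx _ eps_gt0.
apply: le_trans (dist_le r r_ge0) _.
apply: le_trans (ler_wpM2l _ zr) _; first by rewrite ler0n.
rewrite -(rmorph_nat (real_complex R) 2) -!rmorphM lecR !mulrA.
by rewrite ler_pdivrMr; nra.
Qed.

Lemma norm_sumB_le (I : finType) (f g K : I -> C) e :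
  (forall i, `|f i - g i| <= K i * e) -> `|\sum_i f i - \sum_i g i| <= (\sum_i K i) * e.
Proof.
move=> fg_le; rewrite -sumrB mulr_suml (le_trans (ler_norm_sum _ _ _)) //.
by apply: ler_sum => i _.
Qed.

Lemma mxform_id_tensE (alpha : 'M[C]_m -> 'M[C]_m) (X : 'M[C]_(n * m)) v :
  is_linear_map alpha ->
  mxform (id_tens alpha X) v v = \sum_i \sum_k \sum_j \sum_l \sum_a \sum_b
    (v (mxtens_index (i, k)) 0)^* * block X i j a b * v (mxtens_index (j, l)) 0 *
      alpha (delta_mx a b) k l.
Proof.
move=> alpha_lin; rewrite mxform_mxtensE; apply: eq_bigr => i _; apply: eq_bigr => k _.
apply: eq_bigr => j _; apply: eq_bigr => l _.
rewrite id_tensE (linear_sum_delta alpha_lin) summxE mulr_sumr mulr_suml.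
apply: eq_bigr => a _; rewrite summxE mulr_sumr mulr_suml.
by apply: eq_bigr => b _; rewrite mxE; ring.
Qed.

Lemma psd_id_tens_SH (X : 'M[C]_(n * m)) alpha :
  (forall beta, in_gen_cone beta -> psd (id_tens beta X)) -> SH alpha ->
  psd (id_tens alpha X).
Proof.
move=> gen_psd [alpha_lin approx]; apply/psdP => v.
rewrite (mxform_id_tensE _ _ alpha_lin); apply: ge0_approx => e e_gt0.
have [beta [beta_gen beta_close]] := approx e e_gt0.
exists (mxform (id_tens beta X) v v); first by have /psdP := gen_psd _ beta_gen.
rewrite (mxform_id_tensE _ _ (in_gen_cone_linear beta_gen)).
do 6 apply: norm_sumB_le => ?.
by rewrite -mulrBr normrM; apply: ler_wpM2l; rewrite ?normr_ge0 ?ltW.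
Qed.

Lemma SH_in_gen_cone (beta : 'M[C]_m -> 'M[C]_m) : in_gen_cone beta -> SH beta.
Proof.
move=> beta_gen; split; first exact: in_gen_cone_linear.
by move=> e e_gt0; exists beta; split=> // k l p q; rewrite subrr normr0 ltcR.
Qed.

Lemma state_dim_gt0 (w : 'M[C]_m -> C) : is_state w -> (0 < m)%N.
Proof.
move=> [w_lin [_ w1]]; rewrite lt0n; apply: contra_eqN w1 => /eqP m0.
have -> : 1%:M = 0 :> 'M[C]_m by apply/matrixP; case; rewrite m0.
have := w_lin (-1) 0 0; rewrite scaler0 addr0 mulN1r addNr => ->.
by rewrite eq_sym oner_eq0.
Qed.

Lemma psd_choi_state_of_PSH (w : 'M[C]_m -> C) (phi : 'M[C]_n -> 'M[C]_m) :
  PSH (choi phi) -> is_state w -> psd (choi_state w phi).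
Proof.
move=> phi_PSH w_state.
have beta_gen : in_gen_cone (fun y => \sum_(t < 1) w y *: 1%:M).
  by exists 1%N, (fun _ => w), (fun _ => 1%:M); split=> //; split=> // _; apply: psd1.
have := phi_PSH _ (SH_in_gen_cone beta_gen).
rewrite (id_tens_choi_gen phi (fun y => erefl)) big_ord1.
move/(psd_tensmx_l (v := delta_mx (Ordinal (state_dim_gt0 w_state)) 0)); apply.
by rewrite mxform_delta mxE eqxx ltr01.
Qed.

Definition vector_state (u : 'cV[C]_m) (y : 'M[C]_m) : C :=
  mxform y u u / mxform 1%:M u u.

Lemma vector_state_is_state u : u != 0 -> is_state (vector_state u).
Proof.
move=> u_neq0; have N_neq0 := lt0r_neq0 (mxform1_gt0 u_neq0).
split; first by move=> a y z; rewrite /vector_state mxform_linear mulrDl mulrA.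
split; last by rewrite /vector_state divff.
by move=> y /psdP y_psd; rewrite /vector_state divr_ge0 ?mxform1_ge0.
Qed.

Lemma PSH_choi_positive (phi : 'M[C]_n -> 'M[C]_m) :
  is_linear_map phi -> PSH (choi phi) -> positive_map phi.
Proof.
move=> phi_lin phi_PSH x x_psd; apply/psdP => u.
have [->|u_neq0] := eqVneq u 0; first by rewrite mxform0.
have w_state := vector_state_is_state u_neq0.
have N_gt0 := mxform1_gt0 u_neq0.
have -> : mxform (phi x) u u = mxform 1%:M u u * vector_state u (phi x).
  by rewrite /vector_state mulrC divfK ?lt0r_neq0.
rewrite (choi_stateE _ phi_lin w_state) mulr_ge0 ?(ltW N_gt0) //.
exact: psd_pairing_ge0 x_psd (psd_choi_state_of_PSH phi_PSH w_state).
Qed.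

Lemma positive_map_choiP (phi : 'M[C]_n -> 'M[C]_m) :
  is_linear_map phi -> positive_map phi <-> PSH (choi phi).
Proof.
move=> phi_lin; split=> [phi_pos alpha|]; last exact: PSH_choi_positive.
by apply: psd_id_tens_SH => beta; apply: psd_id_tens_choi_gen.
Qed.

Lemma transpose_map_linear (phi : 'M[C]_n -> 'M[C]_m) :
  is_linear_map phi -> is_linear_map (transpose_map phi).
Proof. by move=> phi_lin a x y; rewrite /transpose_map linearP phi_lin linearP. Qed.

Lemma transpose_map_positive (phi : 'M[C]_n -> 'M[C]_m) :
  positive_map phi -> positive_map (transpose_map phi).
Proof. by move=> phi_pos x x_psd; apply/psd_trmx/phi_pos/psd_trmx. Qed.

Lemma positive_map_transpose (phi : 'M[C]_n -> 'M[C]_m) :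
  positive_map (transpose_map phi) <-> positive_map phi.
Proof.
split=> [/transpose_map_positive tr_pos x /tr_pos|]; last exact: transpose_map_positive.
by rewrite /transpose_map !trmxK.
Qed.

End PositiveMaps.

Theorem lemma2p2 (R : rcfType) (n m : nat) :
  (forall phi : 'M[R[i]]_n -> 'M[R[i]]_m, is_linear_map phi ->
     (positive_map phi <-> PSH (choi (transpose_map phi))) /\
     (positive_map phi <-> PSH (choi phi))) /\
  (forall x : 'M[R[i]]_(n * m),
     PSH x <-> exists phi : 'M[R[i]]_n -> 'M[R[i]]_m,
                 [/\ is_linear_map phi, positive_map phi & x = choi phi]).
Proof.
split=> [phi phi_lin|x].
  split; last exact: positive_map_choiP.
  rewrite -(positive_map_choiP (transpose_map_linear phi_lin)).
  exact: iff_sym (positive_map_transpose phi).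
split=> [x_PSH|[phi [phi_lin phi_pos ->]]]; last exact/positive_map_choiP.
have lin_x := map_of_choi_linear x.
exists (map_of_choi x); split; rewrite ?choi_map_of_choi //.
by apply/(positive_map_choiP lin_x); rewrite choi_map_of_choi.
Qed.
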